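(* Let $\mathsf{F},\mathsf{B},\mathsf{F}',\mathsf{B}',\mathsf{G}:\mathbf{Set}\to\mathbf{Set}$ be functors, $(X,f)$ an $(\mathsf{F},\mathsf{B})$-dialgebra, and $\mathcal{R}_{(X,f)}$ a category as in the context. Let $\lambda:\mathsf{F}'X\to\mathsf{G}\mathsf{F}X$ be an invariant from $\overline{\mathsf{F}'}$ to $\mathsf{G}\circ\overline{\mathsf{F}}$ and $\mu:\mathsf{G}\mathsf{B}X\to\mathsf{B}'X$ an invariant from $\mathsf{G}\circ\overline{\mathsf{B}}$ to $\overline{\mathsf{B}'}$ (all with respect to $(X,f)$ and $\mathcal{R}_{(X,f)}$). Define the $(\mathsf{F}',\mathsf{B}')$-dialgebra $(X,f^{\lambda,\mu})$ by $f^{\lambda,\mu}=\mu\circ\mathsf{G}f\circ\lambda$. Then any two elements of $X$ that are dialgebraically bisimilar in $(X,f)$ are dialgebraically bisimilar in $(X,f^{\lambda,\mu})$.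
   Context: For functors $\mathsf{F},\mathsf{B}:\mathbf{Set}\to\mathbf{Set}$, an $(\mathsf{F},\mathsf{B})$-dialgebra is a pair $(X,f)$ with $X$ a set and $f:\mathsf{F}X\to\mathsf{B}X$ a function; a homomorphism $h:(X,f)\to(Y,g)$ is a function $h:X\to Y$ with $g\circ\mathsf{F}h=\mathsf{B}h\circ f$; these form $\mathit{Dialg}(\mathsf{F},\mathsf{B})$. Dialgebraic bisimilarity on $(X,f)$: $x\sim_f y$ iff some homomorphism out of $(X,f)$ identifies $x$ and $y$. Let $\mathcal{E}$ be the subcategory of epimorphisms of $\mathit{Dialg}(\mathsf{F},\mathsf{B})$ and $(X,f)/\mathcal{E}$ the coslice: objects are epimorphisms $h:(X,f)\to(Y,g)$, arrows from $h$ to $h'$ are epimorphisms $k$ with $k\circ h=h'$. $\mathcal{R}_{(X,f)}$ is any full subcategory of $(X,f)/\mathcal{E}$ such that (1) for every object $h$ of $(X,f)/\mathcal{E}$ there exist an object $h'$ of $\mathcal{R}_{(X,f)}$ and an arrow $h\to h'$, and (2) $\mathit{id}_{(X,f)}$ is an object. For an object $h$, $\hat h:\mathit{id}_{(X,f)}\to h$ is the arrow given by $h$. For a functor $\mathsf{H}:\mathbf{Set}\to\mathbf{Set}$, its lifting $\overline{\mathsf{H}}:\mathcal{R}_{(X,f)}\to\mathbf{Set}$ is $\overline{\mathsf{H}}(h:(X,f)\to(Y,g))=\mathsf{H}(Y)$ on objects and $\overline{\mathsf{H}}(k)=\mathsf{H}(k)$ (applied to the underlying function) on arrows; thus $\overline{\mathsf{H}}(\mathit{id}_{(X,f)})=\mathsf{H}X$.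 Given functors $\Phi,\Psi:\mathcal{R}_{(X,f)}\to\mathbf{Set}$, a function $k:\Phi(\mathit{id}_{(X,f)})\to\Psi(\mathit{id}_{(X,f)})$ is an invariant from $\Phi$ to $\Psi$ iff for all $x_1,x_2\in\Phi(\mathit{id}_{(X,f)})$ and every object $h$ of $\mathcal{R}_{(X,f)}$, $\Phi\hat h(x_1)=\Phi\hat h(x_2)$ implies $\Psi\hat h(k(x_1))=\Psi\hat h(k(x_2))$. *)

Set Implicit Arguments.


(** Endofunctors of Set, modelled as endofunctors of Type (laws stated pointwise). *)
Record Functor := {
  fobj :> Type -> Type;
  fmap : forall A B : Type, (A -> B) -> fobj A -> fobj B;
  fmap_id : forall (A : Type) (u : fobj A), fmap (fun a : A => a) u = u;
  fmap_comp : forall (A B C : Type) (g : B -> C) (h : A -> B) (u : fobj A),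
      fmap (fun a => g (h a)) u = fmap g (fmap h u)
}.
Arguments fmap f {A B} _ _.

Section Dialg.
Variables F B : Functor.

Definition is_hom (X Y : Type) (f : F X -> B X) (g : F Y -> B Y) (h : X -> Y) : Prop :=
  forall u : F X, g (fmap F h u) = fmap B h (f u).

Definition is_epi (X Y : Type) (f : F X -> B X) (g : F Y -> B Y) (h : X -> Y) : Prop :=
  is_hom f g h /\
  forall (Z : Type) (k : F Z -> B Z) (k1 k2 : Y -> Z),
    is_hom g k k1 -> is_hom g k k2 ->
    (forall x : X, k1 (h x) = k2 (h x)) -> forall y : Y, k1 y = k2 y.

Definition bisimilar (X : Type) (f : F X -> B X) (x y : X) : Prop :=
  exists (Y : Type) (g : F Y -> B Y) (h : X -> Y), is_hom f g h /\ h x = h y.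

(** A full subcategory R of the coslice (X,f)/E, given by its class of objects
    (an object is an epimorphism h : (X,f) -> (Y,g)), satisfying (1) and (2). *)
Definition is_Rcat (X : Type) (f : F X -> B X)
    (R : forall Y : Type, (F Y -> B Y) -> (X -> Y) -> Prop) : Prop :=
  (forall (Y : Type) (g : F Y -> B Y) (h : X -> Y), R Y g h -> is_epi f g h) /\
  (forall (Y : Type) (g : F Y -> B Y) (h : X -> Y), is_epi f g h ->
     exists (Y' : Type) (g' : F Y' -> B Y') (h' : X -> Y') (k : Y -> Y'),
       R Y' g' h' /\ is_epi g g' k /\ forall x : X, k (h x) = h' x) /\
  R X f (fun x : X => x).

(** Every functor used here has the form
    (h : (X,f) -> (Y,g)) |-> PhiObj Y on objects; only its object X (for id) and
    its action PhiHat h on the arrows  \hat h : id -> h  enter the definition. *)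
Definition invariant (X : Type)
    (R : forall Y : Type, (F Y -> B Y) -> (X -> Y) -> Prop)
    (PhiObj PsiObj : Type -> Type)
    (PhiHat : forall Y : Type, (X -> Y) -> PhiObj X -> PhiObj Y)
    (PsiHat : forall Y : Type, (X -> Y) -> PsiObj X -> PsiObj Y)
    (k : PhiObj X -> PsiObj X) : Prop :=
  forall (x1 x2 : PhiObj X) (Y : Type) (g : F Y -> B Y) (h : X -> Y),
    R Y g h -> PhiHat Y h x1 = PhiHat Y h x2 -> PsiHat Y h (k x1) = PsiHat Y h (k x2).

End Dialg.

(** Lifting  \overline H : R -> Set  on the arrows \hat h (i.e. H h). *)
Definition lift_hat (H : Functor) (X Y : Type) (h : X -> Y) : H X -> H Y := fmap H h.

(** G o \overline H on the arrows \hat h (i.e. G (H h)). *)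
Definition comp_lift_hat (G H : Functor) (X Y : Type) (h : X -> Y) : G (H X) -> G (H Y) :=
  fmap G (fmap H h).
Arguments is_hom : clear implicits.
Arguments is_epi : clear implicits.
Arguments bisimilar : clear implicits.
Arguments is_Rcat : clear implicits.
Arguments invariant : clear implicits.

From Stdlib Require Import ClassicalEpsilon FunctionalExtensionality ProofIrrelevance.

(** Call h : X -> Y *compatible* with a structure phi : F X -> B X when
    F h u1 = F h u2 implies B h (phi u1) = B h (phi u2).  Two facts drive
    the proof:
    - a compatible map h can be replaced by an epimorphism out of (X,phi)
      identifying at least what h identifies: take the image of h as
      carrier and transport phi to it along a section (this uses choice);
    - every object h : (X,f) -> (Y,g) of R is compatible with the twisted
      structure mu o G f o lambda, by the two invariance hypotheses and the
      homomorphism law of h.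
    For the theorem, a homomorphism identifying x and y is compatible with f,
    hence yields an epimorphism identifying x and y; condition (1) on R turns
    it into an object h' of R identifying x and y; h' is compatible with the
    twisted structure, hence yields a homomorphism out of (X, f^{lambda,mu})
    identifying x and y. *)

Lemma fmap_ext (H : Functor) (A C : Type) (g1 g2 : A -> C) (u : H A) :
  (forall a, g1 a = g2 a) -> fmap H g1 u = fmap H g2 u.
Proof.
  intros Hg. replace g2 with g1; [reflexivity|].
  apply functional_extensionality; exact Hg.
Qed.

Section ImageFactorization.

Variables (X Y : Type) (h : X -> Y) (x0 : X).

Definition image_of : Type := {y : Y | exists x, h x = y}.

Definition corestrict (x : X) : image_of :=
  exist _ (h x) (ex_intro _ x eq_refl).

Definition image_section (p : image_of) : X :=
  proj1_sig (constructive_indefinite_description _ (proj2_sig p)).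

Definition image_retract (y : Y) : image_of :=
  match excluded_middle_informative (exists x, h x = y) with
  | left Hy => exist _ y Hy
  | right _ => corestrict x0
  end.

Lemma image_section_spec (p : image_of) : h (image_section p) = proj1_sig p.
Proof.
  unfold image_section.
  destruct (constructive_indefinite_description _ (proj2_sig p)) as [x Hx].
  exact Hx.
Qed.

Lemma corestrict_section (p : image_of) : corestrict (image_section p) = p.
Proof.
  apply eq_sig_hprop; [intros; apply proof_irrelevance|].
  apply image_section_spec.
Qed.

Lemma section_corestrict (x : X) : h (image_section (corestrict x)) = h x.
Proof. apply image_section_spec. Qed.

Lemma retract_after_h (x : X) : image_retract (h x) = corestrict x.
Proof.
  unfold image_retract.
  destruct (excluded_middle_informative (exists x', h x' = h x)) as [Hy|Hy].
  - apply eq_sig_hprop; [intros; apply proof_irrelevance|reflexivity].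
  - exfalso; apply Hy; exists x; reflexivity.
Qed.

End ImageFactorization.

Arguments image_of {X Y} h.
Arguments corestrict {X Y} h x.
Arguments image_section {X Y} h p.
Arguments image_retract {X Y} h x0 y.
Arguments corestrict_section {X Y} h p.
Arguments section_corestrict {X Y} h x.
Arguments retract_after_h {X Y} h x0 x.

Definition compatible (F B : Functor) (X Y : Type) (phi : F X -> B X) (h : X -> Y) : Prop :=
  forall u1 u2 : F X, fmap F h u1 = fmap F h u2 -> fmap B h (phi u1) = fmap B h (phi u2).

Lemma hom_compatible {F B : Functor} {X Y : Type} {f : F X -> B X} {g : F Y -> B Y}
  {h : X -> Y} : is_hom F B X Y f g h -> compatible F B X Y f h.
Proof.
  intros Hh u1 u2 Hu. rewrite <- (Hh u1), <- (Hh u2), Hu. reflexivity.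
Qed.

(** A compatible map is dominated by an epimorphism out of (X,phi): transport
    phi to the image of h along the section; compatibility makes the
    corestriction a homomorphism, and split surjectivity makes it epi. *)
Lemma compatible_quotient {F B : Functor} {X Y : Type} {phi : F X -> B X} {h : X -> Y}
  (x0 : X) : compatible F B X Y phi h ->
  exists (Q : Type) (psi : F Q -> B Q) (e : X -> Q),
    is_epi F B X Q phi psi e /\ forall a b, h a = h b -> e a = e b.
Proof.
  intros Hc.
  set (e := corestrict h). set (s := image_section h). set (r := image_retract h x0).
  assert (Be : forall t, fmap B e t = fmap B r (fmap B h t)).
  { intros t. rewrite <- fmap_comp. apply fmap_ext.
    intros a. symmetry. apply retract_after_h. }
  exists (image_of h), (fun v => fmap B e (phi (fmap F s v))), e.
  split; [split|].
  - intros u. rewrite <- fmap_comp, !Be. f_equal. apply Hc.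
    rewrite <- fmap_comp. apply fmap_ext. apply section_corestrict.
  - intros Z k k1 k2 _ _ Hk p. rewrite <- (corestrict_section h p). apply Hk.
  - intros a b Hab. unfold e. rewrite <- !(retract_after_h h x0), Hab. reflexivity.
Qed.

Lemma compatible_bisimilar {F B : Functor} {X Y : Type} {phi : F X -> B X} {h : X -> Y}
  {x y : X} : compatible F B X Y phi h -> h x = h y -> bisimilar F B X phi x y.
Proof.
  intros Hc Hxy.
  destruct (compatible_quotient x Hc) as (Q & psi & e & [He _] & Hker).
  exists Q, psi, e. split; [exact He | apply Hker, Hxy].
Qed.

Lemma Rcat_identifies {F B : Functor} {X : Type} {f : F X -> B X}
  {R : forall Y : Type, (F Y -> B Y) -> (X -> Y) -> Prop} {Y : Type}
  {g : F Y -> B Y} {e : X -> Y} {a b : X} :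
  is_Rcat F B X f R -> is_epi F B X Y f g e -> e a = e b ->
  exists (Y' : Type) (g' : F Y' -> B Y') (h' : X -> Y'), R Y' g' h' /\ h' a = h' b.
Proof.
  intros (_ & HR & _) He Hab.
  destruct (HR _ _ _ He) as (Y' & g' & h' & k & Rh' & _ & Hk).
  exists Y', g', h'. split; [exact Rh'|].
  rewrite <- (Hk a), <- (Hk b), Hab. reflexivity.
Qed.

Lemma comp_lift_hat_hom {F B : Functor} (G : Functor) {X Y : Type} {f : F X -> B X}
  {g : F Y -> B Y} {h : X -> Y} : is_hom F B X Y f g h -> forall w : G (F X),
  comp_lift_hat G B h (fmap G f w) = fmap G g (comp_lift_hat G F h w).
Proof.
  intros Hh w. unfold comp_lift_hat. rewrite <- !fmap_comp.
  apply fmap_ext. intros a. symmetry. apply Hh.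
Qed.

Lemma twisted_compatible {F B F' B' G : Functor} {X : Type} {f : F X -> B X}
  {R : forall Y : Type, (F Y -> B Y) -> (X -> Y) -> Prop}
  {lam : F' X -> G (F X)} {mu : G (B X) -> B' X}
  (Hlam : invariant F B X R (fobj F') (fun A => G (F A))
            (fun Y h => lift_hat F' h) (fun Y h => comp_lift_hat G F h) lam)
  (Hmu : invariant F B X R (fun A => G (B A)) (fobj B')
            (fun Y h => comp_lift_hat G B h) (fun Y h => lift_hat B' h) mu)
  {Y : Type} {g : F Y -> B Y} {h : X -> Y} :
  R Y g h -> is_hom F B X Y f g h ->
  compatible F' B' X Y (fun u : F' X => mu (fmap G f (lam u))) h.
Proof.
  intros Rh Hh u1 u2 Hu.
  apply (Hmu _ _ Y g h Rh).
  rewrite !(comp_lift_hat_hom G Hh). f_equal.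
  exact (Hlam _ _ Y g h Rh Hu).
Qed.

Theorem theorem4 (F B F' B' G : Functor) (X : Type) (f : F X -> B X)
  (R : forall Y : Type, (F Y -> B Y) -> (X -> Y) -> Prop)
  (HR : is_Rcat F B X f R)
  (lam : F' X -> G (F X)) (mu : G (B X) -> B' X)
  (Hlam : invariant F B X R (fobj F') (fun A => G (F A))
            (fun Y h => lift_hat F' h) (fun Y h => comp_lift_hat G F h) lam)
  (Hmu : invariant F B X R (fun A => G (B A)) (fobj B')
            (fun Y h => comp_lift_hat G B h) (fun Y h => lift_hat B' h) mu)
  (x y : X) :
  bisimilar F B X f x y ->
  bisimilar F' B' X (fun u : F' X => mu (fmap G f (lam u))) x y.
Proof.
  intros (Y & g & h & Hh & Hxy).
  destruct (compatible_quotient x (hom_compatible Hh)) as (Q & gq & e & He & Hker).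
  destruct (Rcat_identifies HR He (Hker _ _ Hxy)) as (Y' & g' & h' & Rh' & Hxy').
  assert (Hh' : is_hom F B X Y' f g' h') by (apply (proj1 HR _ _ _ Rh')).
  exact (compatible_bisimilar (twisted_compatible Hlam Hmu Rh' Hh') Hxy').
Qed.
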